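(* Let $G$ be a finite simple graph with initial configuration $c_0:V(G)\to\mathbb{Z}$, and $(c_t)_{t\ge0}$ the configurations of the diffusion process. If there exists a constant $M$ such that $|c_t(u)-c_t(v)|\leq M$ for all adjacent $u,v$ and all $t\geq 0$, then the chip configurations are eventually periodic.
   Context: Diffusion process: $c_{t+1}(u)=c_t(u)-|\{w\in N(u): c_t(u)>c_t(w)\}|+|\{w\in N(u): c_t(u)<c_t(w)\}|$ for all $u$ simultaneously. Eventually periodic means there exist $t\ge0$, $p\ge1$ with $c_{t+p}=c_t$. *)

From mathcomp Require Import all_boot all_order all_algebra.
Set Implicit Arguments. Unset Strict Implicit. Unset Printing Implicit Defensive.
Import Order.TTheory GRing.Theory Num.Theory.
Local Open Scope ring_scope.

Definition simple_graph (T : finType) (e : rel T) : Prop :=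
  symmetric e /\ irreflexive e.

Definition diffuse_step (T : finType) (e : rel T) (c : T -> int) : T -> int :=
  fun u => c u - (#|[pred w | e u w && (c w < c u)]|)%:Z
               + (#|[pred w | e u w && (c u < c w)]|)%:Z.

Definition config (T : finType) (e : rel T) (c0 : T -> int) (t : nat) : T -> int :=
  iter t (diffuse_step e) c0.

Definition eventually_periodic (T : finType) (e : rel T) (c0 : T -> int) : Prop :=
  exists t p : nat, (1 <= p)%N /\ config e c0 (t + p) = config e c0 t.

(* Chips are conserved on every connected component, because each edge moves
   one chip from its richer to its poorer endpoint.  If differences along edges
   stay bounded by M, then on a component C every value c_t(u) differs from the
   average of c_t over C by at most M times a path length, and this average is
   the constant sum of c_0 over C divided by |C|.  So all configurations lie in
   a finite set, and by the pigeonhole principle two of them coincide. *)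

From mathcomp Require Import all_boot all_order all_algebra zify.
From Stdlib Require Import FunctionalExtensionality.

Set Implicit Arguments.
Unset Strict Implicit.
Unset Printing Implicit Defensive.
Import Order.TTheory GRing.Theory Num.Theory.
Local Open Scope ring_scope.

Definition edge_bounded (T : finType) (e : rel T) (M : int) (f : T -> int) :=
  forall u v, e u v -> `|f u - f v| <= M.

Lemma configS (T : finType) (e : rel T) c0 t :
  config e c0 t.+1 = diffuse_step e (config e c0 t).
Proof. exact: iterS. Qed.

Section Conservation.

Variables (T : finType) (e : rel T) (C : {pred T}).
Hypotheses (e_sym : symmetric e) (C_closed : closed e C).

Lemma card_adj_closed (P : pred T) w : w \in C ->
  #|[pred x | e w x && P x]| = (\sum_(x in C) (e w x && P x))%N.
Proof.
move=> wC; rewrite -sum1_card big_mkcond [RHS]big_mkcond /=.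
apply: eq_bigr => x _; rewrite inE.
case: (boolP (e w x)) => /= [wx | _]; last by case: (x \in C).
by rewrite -(C_closed wx) wC; case: (P x).
Qed.

Lemma sum_card_adj_swap (r : rel T) :
  (\sum_(w in C) #|[pred x | e w x && r w x]| =
   \sum_(w in C) #|[pred x | e w x && r x w]|)%N.
Proof.
rewrite (eq_bigr _ (fun w wC => card_adj_closed (r w) wC)).
rewrite (eq_bigr _ (fun w wC => card_adj_closed (r^~ w) wC)) exchange_big /=.
by apply: eq_bigr => w _; apply: eq_bigr => x _; rewrite e_sym.
Qed.

Lemma sum_diffuse_step_closed (c : T -> int) :
  \sum_(w in C) diffuse_step e c w = \sum_(w in C) c w.
Proof.
rewrite /diffuse_step big_split sumrB /= -!(big_morph Posz PoszD (erefl 0%:Z)).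
by rewrite (sum_card_adj_swap (fun w x => c w < c x)) subrK.
Qed.

Lemma sum_config_closed c0 t :
  \sum_(w in C) config e c0 t w = \sum_(w in C) c0 w.
Proof. by elim: t => // t IH; rewrite configS sum_diffuse_step_closed. Qed.

End Conservation.

Section EdgeBounded.

Variables (T : finType) (e : rel T) (M : int).

Lemma edge_bounded_path f x p : edge_bounded e M f -> path e x p ->
  `|f x - f (last x p)| <= M *+ size p.
Proof.
move=> fM; elim: p x => [|y p IH] x /=; first by rewrite subrr normr0.
case/andP=> xy yp; apply: le_trans (ler_distD (f y) _ _) _.
by rewrite mulrS lerD ?fM ?IH.
Qed.

Lemma edge_bounded_connect u w : connect e u w ->
  exists n, forall f, edge_bounded e M f -> `|f u - f w| <= M *+ n.
Proof.
case/connectP=> p up ->; exists (size p) => f fM.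
exact: edge_bounded_path.
Qed.

End EdgeBounded.

Lemma uniformly_bounded_fin (T : finType) (f : T -> nat -> int) :
  (forall x, exists K : int, forall t, `|f x t| <= K) ->
  exists N : nat, forall x t, `|f x t| <= N%:Z.
Proof.
case/fin_all_exists=> K fK; exists (\max_x absz (K x))%N => x t.
have := @leq_bigmax _ (fun x => absz (K x)) x; have := fK x t; lia.
Qed.

Lemma exists_repeat (A : finType) (g : nat -> A) :
  exists i j, (i < j)%N /\ g i = g j.
Proof.
pose h (i : 'I_#|A|.+1) := g i.
have /injectivePn[i [j ij hij]] : ~~ injectiveb h.
  by apply/injectiveP => /leq_card; rewrite card_ord ltnn.
case: (ltngtP i j) => [lt_ij | lt_ji | eq_ij]; first by exists i, j.
  by exists j, i.
by case/negP: ij; apply/eqP/val_inj.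
Qed.

Section Diffusion.

Variables (T : finType) (e : rel T) (c0 : T -> int).

Lemma config_bounded_vertex (M : int) u :
  symmetric e -> (forall t, edge_bounded e M (config e c0 t)) ->
  exists K : int, forall t, `|config e c0 t u| <= K.
Proof.
move=> e_sym cM; set C := connect e u.
have /fin_all_exists[n un] : forall w, exists n : nat, connect e u w ->
    forall f, edge_bounded e M f -> `|f u - f w| <= M *+ n.
  move=> w; case: (boolP (connect e u w)) => [uw | _]; last by exists 0%N.
  by have [n un] := edge_bounded_connect M uw; exists n.
exists (\sum_(w in C) M *+ n w + `|\sum_(w in C) c0 w|) => t.
set c := config e c0 t.
have C_gt0 : (0 < #|C|)%N by apply/card_gt0P; exists u; apply: connect0.
have cuC : c u *+ #|C| = \sum_(w in C) (c u - c w) + \sum_(w in C) c0 w.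
  rewrite -(sum_config_closed e_sym (connect_closed (sym_connect_sym e_sym) u) c0 t).
  by rewrite -big_split -sumr_const; apply: eq_bigr => w _; rewrite /= subrK.
apply: (le_trans (y := `|c u *+ #|C| |)).
  by rewrite normrMn -(prednK C_gt0) mulrS lerDl mulrn_wge0.
rewrite cuC; apply: le_trans (ler_normD _ _) _; rewrite lerD2r.
apply: le_trans (ler_norm_sum _ _ _) _.
by apply: ler_sum => w uw; exact: (un w uw c (cM t)).
Qed.

Lemma eventually_periodic_bounded (N : nat) :
  (forall u t, `|config e c0 t u| <= N%:Z) -> eventually_periodic e c0.
Proof.
move=> cN.
pose code t : {ffun T -> 'I_(N + N).+1} :=
  [ffun u => inord (absz (config e c0 t u + N%:Z))].
have [i [j [lt_ij code_ij]]] := exists_repeat code.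
exists i, (j - i)%N; split; first by rewrite subn_gt0.
rewrite subnKC ?(ltnW lt_ij) //; apply: functional_extensionality => u.
have := congr1 (fun f : {ffun T -> 'I_(N + N).+1} => val (f u)) code_ij.
rewrite !ffunE /= !inordK.
- by have := cN u i; have := cN u j; lia.
- by have := cN u j; lia.
- by have := cN u i; lia.
Qed.

End Diffusion.

Theorem lemma4 (T : finType) (e : rel T) (c0 : T -> int) :
  simple_graph e ->
  (exists M : int, forall (t : nat) (u v : T), e u v ->
      `|config e c0 t u - config e c0 t v| <= M) ->
  eventually_periodic e c0.
Proof.
move=> [e_sym _] [M cM].
have [N cN] := uniformly_bounded_fin (f := fun u t => config e c0 t u)
  (fun u => config_bounded_vertex u e_sym cM).
exact: eventually_periodic_bounded cN.
Qed.
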